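(* Let $q$ be a prime power and let $\mathcal{H}_q$ be the Hermitian unital. If $s \geq 3$ lines of $\mathcal{H}_q$ pairwise intersect, then either all of them contain a common point of $\mathcal{H}_q$, or they form an $s$-fan.
   Context: The Hermitian unital $\mathcal{H}_q$ is the partial linear space whose point set is $P(\mathcal{H}_q)=\{\langle x,y,z\rangle \subset \mathbb{F}_{q^2}^3 : x^{q+1}+y^{q+1}+z^{q+1}=0\}$ (points of the projective plane $\mathrm{PG}(2,q^2)$, i.e. one-dimensional subspaces of $\mathbb{F}_{q^2}^3$), and whose lines are the intersections with $P(\mathcal{H}_q)$ of those lines of $\mathrm{PG}(2,q^2)$ meeting $P(\mathcal{H}_q)$ in exactly $q+1$ points (every line of $\mathrm{PG}(2,q^2)$ meets $P(\mathcal{H}_q)$ in $1$ or $q+1$ points). For $s \geq 3$, an $s$-fan is a set of $s$ pairwise intersecting lines such that $s-1$ of the lines all pass through a common point while the remaining line does not pass through that point. *)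

From HB Require Import structures.
From mathcomp Require Import all_boot all_order all_algebra all_field.
Set Implicit Arguments. Unset Strict Implicit. Unset Printing Implicit Defensive.
Import GRing.Theory.
Local Open Scope ring_scope.

(* Projective plane PG(2, F): points are the one-dimensional subspaces of F^3,
   represented canonically by the row space <<v>>%MS of a nonzero v : 'rV_3. *)
Section Hermitian.
Variables (F : finFieldType) (q : nat).

Definition herm (v : 'rV[F]_3) : F := \sum_(i < 3) v 0 i ^+ q.+1.

Definition unital_points : {set 'M[F]_3} :=
  [set <<v>>%MS | v : 'rV[F]_3 in [set v : 'rV[F]_3 | (v != 0) && (herm v == 0)]].

Definition pg_line (w : 'rV[F]_3) : {set 'M[F]_3} :=
  [set <<v>>%MS | v : 'rV[F]_3 in [set v : 'rV[F]_3 | (v != 0) && (v *m w^T == 0)]].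

Definition unital_lines : {set {set 'M[F]_3}} :=
  [set pg_line w :&: unital_points | w : 'rV[F]_3 in
     [set w : 'rV[F]_3 | (w != 0) && (#|pg_line w :&: unital_points| == q.+1)%N]].

End Hermitian.

Definition is_fan (T : finType) (S : {set {set T}}) : Prop :=
  exists P : T, exists L0, L0 \in S /\ P \notin L0 /\
    forall L, L \in S -> L != L0 -> P \in L.

From HB Require Import structures.
From mathcomp Require Import all_boot all_order all_algebra all_field.
From mathcomp Require Import ring.
Set Implicit Arguments. Unset Strict Implicit. Unset Printing Implicit Defensive.
Import GRing.Theory.
Local Open Scope ring_scope.

(* A line meeting the three sides of a triangle of unital lines passes through
   a vertex (the unital has no O'Nan configuration).  With h(u, v) = sum u_i v_i^q,
   q-th powering being the involution of GF(q^2), write the points on the sides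
   as s1 a + t1 c, s2 a + t2 b, s3 b + t3 c for isotropic vertices a, b, c.
   Isotropy makes x1 = t1 s1^q h(c, a), x2 = s2 t2^q h(a, b), x3 = s3 t3^q h(b, c)
   skew (x + x^q = 0), and collinearity reads s1 t2 t3 = - t1 s2 s3 =: - m.  Then
   x1 x2 x3 = - m m^q g with g = h(a, b) h(b, c) h(c, a); a product of three skew
   elements is skew, so m m^q (g + g^q) = 0, while g + g^q = |det(a, b, c)|^2 != 0.
   Hence m = 0: one of the points is a vertex.

   For pairwise meeting lines that are not concurrent, pick a triangle among
   them.  Every other line passes through a vertex, and two lines through
   distinct vertices, other than the sides there, would together with two sides
   form a forbidden configuration; so all lines but one pass through one vertex. *)

Definition pchar_pow (R : comNzRingType) (n : nat) of [pchar R].-nat n :=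
  fun x : R => x ^+ n.

Section PcharPower.
Variables (R : comNzRingType) (n : nat) (pchar_n : [pchar R].-nat n).

Fact pchar_pow_is_zmod_morphism : zmod_morphism (pchar_pow pchar_n).
Proof.
by move=> x y; apply: (addIr (y ^+ n)); rewrite /pchar_pow -exprDn_pchar // !subrK.
Qed.

Fact pchar_pow_is_monoid_morphism : monoid_morphism (pchar_pow pchar_n).
Proof. by split=> [|x y]; rewrite /pchar_pow ?expr1n ?exprMn. Qed.

HB.instance Definition _ := GRing.isZmodMorphism.Build R R (pchar_pow pchar_n)
  pchar_pow_is_zmod_morphism.
HB.instance Definition _ := GRing.isMonoidMorphism.Build R R (pchar_pow pchar_n)
  pchar_pow_is_monoid_morphism.

End PcharPower.

Definition i0 : 'I_3 := @Ordinal 3 0 isT.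
Definition i1 : 'I_3 := @Ordinal 3 1 isT.
Definition i2 : 'I_3 := @Ordinal 3 2 isT.

Lemma ord3P (i : 'I_3) : [\/ i = i0, i = i1 | i = i2].
Proof.
by case: i => [[|[|[|//]]] ?]; [constructor 1 | constructor 2 | constructor 3];
  apply: val_inj.
Qed.

Lemma sum3 (V : nmodType) (f : 'I_3 -> V) : \sum_(i < 3) f i = f i0 + f i1 + f i2.
Proof.
by rewrite !big_ord_recl big_ord0 addr0 addrA; congr (f _ + f _ + f _); apply: val_inj.
Qed.

Section Coordinates.
Variable F : fieldType.
Implicit Types (k s t : F) (u v w x a b c d e g : 'rV[F]_3).

Definition dot u v := u 0 i0 * v 0 i0 + u 0 i1 * v 0 i1 + u 0 i2 * v 0 i2.

Definition cross u v : 'rV[F]_3 := \row_i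
  [:: u 0 i1 * v 0 i2 - u 0 i2 * v 0 i1;
      u 0 i2 * v 0 i0 - u 0 i0 * v 0 i2;
      u 0 i0 * v 0 i1 - u 0 i1 * v 0 i0]`_i.

Definition det3 u v w := dot (cross u v) w.

Lemma dotC u v : dot u v = dot v u.
Proof. by rewrite /dot; ring. Qed.

Lemma dotZl k u v : dot (k *: u) v = k * dot u v.
Proof. by rewrite /dot !mxE; ring. Qed.

Lemma dot_mul_tr_eq0 u v : (u *m v^T == 0) = (dot u v == 0).
Proof.
have uvE : (u *m v^T) 0 0 = dot u v by rewrite mxE sum3 !mxE.
apply/eqP/eqP => [uv0 | uv0]; first by rewrite -uvE uv0 mxE.
by apply/rowP => i; rewrite ord1 uvE uv0 mxE.
Qed.

Lemma row3_neq0 v : v != 0 -> exists j, v 0 j != 0.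
Proof.
move=> v0; apply/existsP; apply: contraR v0; rewrite negb_exists => /forallP v0.
by apply/eqP/rowP => j; rewrite mxE; apply/eqP; rewrite -[_ == _]negbK v0.
Qed.

Lemma cross_eq0 u v : v != 0 -> cross u v = 0 -> exists k, u = k *: v.
Proof.
move=> /row3_neq0 [j vj] /rowP uv0.
have uv i : u 0 i * v 0 j = u 0 j * v 0 i.
  move: (uv0 i0) (uv0 i1) (uv0 i2); rewrite !mxE /=.
  move=> /subr0_eq h0 /subr0_eq h1 /subr0_eq h2.
  by case: (ord3P i) => ->; case: (ord3P j) => ->; rewrite ?h0 ?h1 ?h2.
by exists (u 0 j / v 0 j); apply/rowP => i; rewrite mxE mulrAC -uv mulfK.
Qed.

Lemma cross_neq0 u v : u != 0 -> v != 0 -> <<u>>%MS != <<v>>%MS -> cross u v != 0.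
Proof.
move=> u0 v0; apply: contraNN => /eqP /(cross_eq0 v0) [k uk].
have k0 : k != 0 by apply: contraNneq u0 => k0; rewrite uk k0 scale0r.
by rewrite uk; apply/eqP/eq_genmx/eqmx_scale.
Qed.

Lemma cross_cross w u v : cross w (cross u v) = dot w v *: u - dot w u *: v.
Proof. by apply/rowP => i; case: (ord3P i) => ->; rewrite !mxE /= /dot; ring. Qed.

Lemma dot_eq0_det3 u v w x : w != 0 -> dot u w = 0 -> dot v w = 0 ->
  cross u v != 0 -> (dot x w == 0) = (det3 u v x == 0).
Proof.
move=> w0 uw vw uv0.
have [k wk] : exists k, w = k *: cross u v.
  by apply: cross_eq0 uv0 _; rewrite cross_cross dotC vw dotC uw !scale0r subr0.
have k0 : k != 0 by apply: contraNneq w0 => k0; rewrite wk k0 scale0r.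
by rewrite wk dotC dotZl mulf_eq0 (negbTE k0).
Qed.

Lemma det3_rot u v w : det3 u v w = det3 v w u.
Proof. by rewrite /det3 /dot !mxE /=; ring. Qed.

Lemma cramer a b c d :
  det3 a b c *: d = det3 d b c *: a + det3 a d c *: b + det3 a b d *: c.
Proof. by apply/rowP => i; case: (ord3P i) => ->; rewrite /det3 /dot !mxE /=; ring. Qed.

Lemma det3Z k a b c : det3 (k *: a) (k *: b) (k *: c) = k ^+ 3 * det3 a b c.
Proof. by rewrite /det3 /dot !mxE /=; ring. Qed.

Lemma det3_comb s1 t1 s2 t2 s3 t3 a b c :
  det3 (s1 *: a + t1 *: c) (s2 *: a + t2 *: b) (s3 *: b + t3 *: c) =
  det3 a b c * (s1 * t2 * t3 + t1 * s2 * s3).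
Proof. by rewrite /det3 /dot !mxE /=; ring. Qed.

End Coordinates.

Section HermitianForm.
Variables (F : fieldType) (cj : {rmorphism F -> F}).
Hypothesis cjK : involutive cj.
Implicit Types (k s t : F) (u v a b c d e g : 'rV[F]_3).

Definition hform u v := dot u (map_mx cj v).

Lemma hformC u v : cj (hform u v) = hform v u.
Proof. by rewrite /hform /dot !mxE !rmorphD !rmorphM !cjK; ring. Qed.

Lemma hformZ k u : hform (k *: u) (k *: u) = k * cj k * hform u u.
Proof. by rewrite /hform /dot !mxE !rmorphM; ring. Qed.

Lemma hform_comb s t u v : hform u u = 0 -> hform v v = 0 ->
  hform (s *: u + t *: v) (s *: u + t *: v) =
  s * cj t * hform u v + cj (s * cj t * hform u v).
Proof.
move=> uu vv.
have -> : hform (s *: u + t *: v) (s *: u + t *: v) =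
    s * cj s * hform u u + s * cj t * hform u v
  + t * cj s * hform v u + t * cj t * hform v v.
  by rewrite /hform /dot !mxE !rmorphD !rmorphM; ring.
by rewrite uu vv -(hformC u v) !rmorphM cjK; ring.
Qed.

(* |det(a, b, c)|^2 is the Gram determinant of [hform], whose diagonal vanishes here. *)
Lemma det3_norm a b c : hform a a = 0 -> hform b b = 0 -> hform c c = 0 ->
  det3 a b c * cj (det3 a b c) =
  hform a b * hform b c * hform c a + cj (hform a b * hform b c * hform c a).
Proof.
move=> aa bb cc.
have -> : det3 a b c * cj (det3 a b c) =
    hform a a * (hform b b * hform c c - hform b c * hform c b)
  - hform a b * (hform b a * hform c c - hform b c * hform c a)
  + hform a c * (hform b a * hform c b - hform b b * hform c a).
  by rewrite /det3 /hform /dot !mxE /= !(rmorphD, rmorphB, rmorphM); ring.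
by rewrite aa bb cc !rmorphM !hformC; ring.
Qed.

Lemma skew_prod_norm x1 x2 x3 m z :
  x1 + cj x1 = 0 -> x2 + cj x2 = 0 -> x3 + cj x3 = 0 ->
  x1 * x2 * x3 = m * cj m * z -> m * cj m * (z + cj z) = 0.
Proof.
have skewE x : x + cj x = 0 -> cj x = - x by move/eqP; rewrite addrC addr_eq0 => /eqP.
move=> /skewE x1E /skewE x2E /skewE x3E x123.
have -> : m * cj m * (z + cj z) = m * cj m * z + cj (m * cj m * z).
  by rewrite !rmorphM cjK; ring.
by rewrite -x123 !rmorphM x1E x2E x3E; ring.
Qed.

Lemma isotropic_menelaus_coef a b c s1 t1 s2 t2 s3 t3 :
  hform a a = 0 -> hform b b = 0 -> hform c c = 0 -> det3 a b c != 0 ->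
  hform (s1 *: a + t1 *: c) (s1 *: a + t1 *: c) = 0 ->
  hform (s2 *: a + t2 *: b) (s2 *: a + t2 *: b) = 0 ->
  hform (s3 *: b + t3 *: c) (s3 *: b + t3 *: c) = 0 ->
  s1 * t2 * t3 + t1 * s2 * s3 = 0 -> t1 * s2 * s3 = 0.
Proof.
move=> aa bb cc abc0 dd ee ff.
set m := t1 * s2 * s3; move/eqP; rewrite addrC addr_eq0 => /eqP mE.
have skew1 : - (t1 * cj s1 * hform c a) + cj (- (t1 * cj s1 * hform c a)) = 0.
  by rewrite rmorphN -opprD -hform_comb // addrC dd oppr0.
have skew2 : s2 * cj t2 * hform a b + cj (s2 * cj t2 * hform a b) = 0.
  by rewrite -hform_comb.
have skew3 : s3 * cj t3 * hform b c + cj (s3 * cj t3 * hform b c) = 0.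
  by rewrite -hform_comb.
have cjmE : cj m = - (cj s1 * cj t2 * cj t3) by rewrite mE rmorphN !rmorphM.
have prod : - (t1 * cj s1 * hform c a) * (s2 * cj t2 * hform a b)
               * (s3 * cj t3 * hform b c)
           = m * cj m * (hform a b * hform b c * hform c a).
  by rewrite cjmE /m; ring.
have := skew_prod_norm skew1 skew2 skew3 prod.
rewrite -det3_norm // => /eqP.
rewrite mulf_eq0 (mulf_eq0 m) (mulf_eq0 (det3 a b c)) !fmorph_eq0 !orbb.
by rewrite (negbTE abc0) orbF => /eqP.
Qed.

Lemma isotropic_menelaus a b c d e g :
  hform a a = 0 -> hform b b = 0 -> hform c c = 0 ->
  hform d d = 0 -> hform e e = 0 -> hform g g = 0 -> det3 a b c != 0 ->
  det3 c a d = 0 -> det3 a b e = 0 -> det3 b c g = 0 -> det3 d e g = 0 ->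
  [\/ det3 a b d = 0, det3 b c e = 0 | det3 c a g = 0].
Proof.
move=> aa bb cc dd ee gg abc0 cad abe bcg deg.
set D := det3 a b c in abc0.
have dE : D *: d = det3 d b c *: a + det3 a b d *: c.
  by rewrite (cramer a b c d) -(det3_rot c a d) cad scale0r addr0.
have eE : D *: e = det3 e b c *: a + det3 a e c *: b.
  by rewrite (cramer a b c e) abe scale0r addr0.
have gE : D *: g = det3 a g c *: b + det3 a b g *: c.
  by rewrite (cramer a b c g) (det3_rot g b c) bcg scale0r add0r.
have iso v : hform v v = 0 -> hform (D *: v) (D *: v) = 0.
  by move=> vv; rewrite hformZ vv mulr0.
have menelaus : det3 d b c * det3 a e c * det3 a b g
              + det3 a b d * det3 e b c * det3 a g c = 0.
  have := det3Z D d e g; rewrite deg mulr0 dE eE gE det3_comb.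
  by move/eqP; rewrite mulf_eq0 (negbTE abc0) => /eqP.
have := isotropic_menelaus_coef aa bb cc abc0 _ _ _ menelaus.
rewrite -dE -eE -gE => /(_ (iso d dd) (iso e ee) (iso g gg)) /eqP.
rewrite !mulf_eq0 -orbA (det3_rot e b c) (det3_rot c a g).
by case/or3P=> /eqP; [constructor 1 | constructor 2 | constructor 3].
Qed.

End HermitianForm.

Definition triangle (T : finType) (L1 L2 L3 : {set T}) (A B C : T) :=
  [/\ A \in L1 :&: L2, B \in L2 :&: L3, C \in L3 :&: L1
    & [&& A \notin L3, B \notin L1 & C \notin L2]].

Lemma triangle_rot (T : finType) (L1 L2 L3 : {set T}) A B C :
  triangle L1 L2 L3 A B C -> triangle L2 L3 L1 B C A.
Proof. by case=> ? ? ? /and3P[? ? ?]; split=> //; apply/and3P. Qed.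

Lemma triangle_swap (T : finType) (L1 L2 L3 : {set T}) A B C :
  triangle L1 L2 L3 A B C -> triangle L2 L1 L3 A C B.
Proof. by case=> ? ? ? /and3P[? ? ?]; split; rewrite 1?setIC //; apply/and3P. Qed.

Section Unital.
Variables (F : finFieldType) (q : nat).
Implicit Types (k : F) (u v w x : 'rV[F]_3) (P : 'M[F]_3) (L : {set 'M[F]_3}).
Local Notation U := (unital_points F q).
Local Notation lines := (unital_lines F q).

Lemma mem_pg_line v w : v != 0 -> (<<v>>%MS \in pg_line w) = (dot v w == 0).
Proof.
move=> v0; apply/imsetP/idP => [[v'] | vw].
  2: by exists v; rewrite // inE v0 dot_mul_tr_eq0.
rewrite inE dot_mul_tr_eq0 => /andP[_ /eqP v'w] /genmxP/andP[/sub_rVP[k ->] _].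
by rewrite dotZl v'w mulr0.
Qed.

Lemma unital_pointP P : P \in U -> exists v, [/\ v != 0, herm q v = 0 & P = <<v>>%MS].
Proof. by case/imsetP => v; rewrite inE => /andP[v0 /eqP vU] ->; exists v. Qed.

Lemma unital_lineP L : L \in lines -> exists2 w, w != 0 & L = pg_line w :&: U.
Proof. by case/imsetP => w; rewrite inE => /andP[w0 _] ->; exists w. Qed.

Lemma unital_line_sub L P : L \in lines -> P \in L -> P \in U.
Proof. by case/unital_lineP => w _ -> /setIP[]. Qed.

Lemma unital_line_det L u v x : L \in lines -> u != 0 -> v != 0 -> x != 0 ->
  <<u>>%MS \in L -> <<v>>%MS \in L -> <<u>>%MS != <<v>>%MS -> <<x>>%MS \in U ->
  (<<x>>%MS \in L) = (det3 u v x == 0).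
Proof.
move=> /unital_lineP[w w0 ->] u0 v0 x0.
rewrite !in_setI !mem_pg_line // => /andP[/eqP uw _] /andP[/eqP vw _] uv ->.
by rewrite andbT (dot_eq0_det3 _ w0 uw vw) // cross_neq0.
Qed.

Lemma unital_lines_meet_once L M P Q : L \in lines -> M \in lines -> L != M ->
  P \in L -> P \in M -> Q \in L -> Q \in M -> P = Q.
Proof.
move=> hL hM LM PL PM QL QM; apply/eqP; apply: contraNT LM => PQ.
have [p [p0 _ eP]] := unital_pointP (unital_line_sub hL PL).
have [r [r0 _ eQ]] := unital_pointP (unital_line_sub hL QL).
subst P Q; apply/eqP/setP => X.
have [XU | XU] := boolP (X \in U); last first.
  by rewrite (contraNF (unital_line_sub hL)) ?(contraNF (unital_line_sub hM)).
have [x [x0 _ eX]] := unital_pointP XU; subst X.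
by rewrite (unital_line_det hL p0 r0) // (unital_line_det hM p0 r0).
Qed.

Variable cj : {rmorphism F -> F}.
Hypothesis cjE : forall z : F, cj z = z ^+ q.
Hypothesis cjK : involutive cj.

Lemma herm_hform v : herm q v = hform cj v v.
Proof. by rewrite /herm sum3 /hform /dot !mxE !cjE !exprS. Qed.

Lemma unital_line_vec L P : L \in lines -> P \in L ->
  exists v, [/\ v != 0, hform cj v v = 0, P = <<v>>%MS & <<v>>%MS \in U].
Proof.
move=> hL /(unital_line_sub hL) PU; have [v [v0 vv eP]] := unital_pointP PU.
by exists v; rewrite -herm_hform -eP.
Qed.

Lemma unital_menelaus L1 L2 L3 L A B C D E G :
  L1 \in lines -> L2 \in lines -> L3 \in lines -> L \in lines ->
  triangle L1 L2 L3 A B C -> D \in L :&: L1 -> E \in L :&: L2 -> G \in L :&: L3 ->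
  D != E -> [\/ D \in L2, E \in L3 | G \in L1].
Proof.
move=> hL1 hL2 hL3 hL [/setIP[A1 A2] /setIP[B2 B3] /setIP[C3 C1] /and3P[nA3 nB1 nC2]].
move=> /setIP[DL D1] /setIP[EL E2] /setIP[GL G3] DE.
have [a [a0 aa eA AU]] := unital_line_vec hL1 A1.
have [b [b0 bb eB BU]] := unital_line_vec hL2 B2.
have [c [c0 cc eC CU]] := unital_line_vec hL3 C3.
have [d [d0 dd eD DU]] := unital_line_vec hL DL.
have [e [e0 ee eE EU]] := unital_line_vec hL EL.
have [g [g0 gg eG GU]] := unital_line_vec hL GL.
subst A B C D E G.
have AB : <<a>>%MS != <<b>>%MS by apply: contraNneq nA3 => ->.
have CA : <<c>>%MS != <<a>>%MS by apply: contraNneq nA3 => <-.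
have BC : <<b>>%MS != <<c>>%MS by apply: contraNneq nB1 => ->.
have abc0 : det3 a b c != 0 by rewrite -(unital_line_det hL2 a0 b0 c0 A2 B2 AB CU).
have cad : det3 c a d = 0.
  by apply/eqP; rewrite -(unital_line_det hL1 c0 a0 d0 C1 A1 CA DU).
have abe : det3 a b e = 0.
  by apply/eqP; rewrite -(unital_line_det hL2 a0 b0 e0 A2 B2 AB EU).
have bcg : det3 b c g = 0.
  by apply/eqP; rewrite -(unital_line_det hL3 b0 c0 g0 B3 C3 BC GU).
have deg : det3 d e g = 0.
  by apply/eqP; rewrite -(unital_line_det hL d0 e0 g0 DL EL DE GU).
rewrite (unital_line_det hL2 a0 b0 d0 A2 B2 AB DU).
rewrite (unital_line_det hL3 b0 c0 e0 B3 C3 BC EU).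
rewrite (unital_line_det hL1 c0 a0 g0 C1 A1 CA GU).
by case: (isotropic_menelaus cjK aa bb cc dd ee gg abc0 cad abe bcg deg) => /eqP;
  [constructor 1 | constructor 2 | constructor 3].
Qed.

Lemma unital_transversal L1 L2 L3 L A B C :
  L1 \in lines -> L2 \in lines -> L3 \in lines -> L \in lines ->
  triangle L1 L2 L3 A B C ->
  L :&: L1 != set0 -> L :&: L2 != set0 -> L :&: L3 != set0 ->
  [|| A \in L, B \in L | C \in L].
Proof.
move=> hL1 hL2 hL3 hL tri.
have [/setIP[A1 A2] /setIP[B2 B3] /setIP[C3 C1] /and3P[nA3 nB1 _]] := tri.
have L12 : L1 != L2 by apply: contraNneq nB1 => ->.
have L23 : L2 != L3 by apply: contraNneq nA3 => <-.
have L31 : L3 != L1 by apply: contraNneq nB1 => <-.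
case/set0Pn=> D DL1; have /setIP[DL D1] := DL1.
case/set0Pn=> E EL2; have /setIP[EL E2] := EL2.
case/set0Pn=> G GL3; have /setIP[GL G3] := GL3.
have [DE | DE] := eqVneq D E.
  by subst E; rewrite -(unital_lines_meet_once hL1 hL2 L12 D1 E2 A1 A2) DL.
case: (unital_menelaus hL1 hL2 hL3 hL tri DL1 EL2 GL3 DE) => [D2 | E3 | G1].
- by rewrite -(unital_lines_meet_once hL1 hL2 L12 D1 D2 A1 A2) DL.
- by rewrite -(unital_lines_meet_once hL2 hL3 L23 E2 E3 B2 B3) EL orbT.
- by rewrite -(unital_lines_meet_once hL3 hL1 L31 G3 G1 C3 C1) GL !orbT.
Qed.

End Unital.

Section PairwiseMeetingLines.
Variables (T : finType) (lines S : {set {set T}}).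
Hypothesis lines_meet_once : forall L M P Q, L \in lines -> M \in lines -> L != M ->
  P \in L -> P \in M -> Q \in L -> Q \in M -> P = Q.
Hypothesis transversal_through_vertex : forall L1 L2 L3 L A B C,
  L1 \in lines -> L2 \in lines -> L3 \in lines -> L \in lines ->
  triangle L1 L2 L3 A B C ->
  L :&: L1 != set0 -> L :&: L2 != set0 -> L :&: L3 != set0 ->
  [|| A \in L, B \in L | C \in L].
Hypothesis S_lines : S \subset lines.
Hypothesis S_meet : forall L M, L \in S -> M \in S -> L :&: M != set0.

Let inS L : L \in S -> L \in lines := fun LS => subsetP S_lines L LS.

Let meet_onceS L M P Q : L \in S -> M \in S -> L != M ->
  P \in L -> P \in M -> Q \in L -> Q \in M -> P = Q.
Proof. by move=> LS MS; apply: lines_meet_once (inS LS) (inS MS). Qed.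

Lemma triangle_in_S L1 L2 L3 A : L1 \in S -> L2 \in S -> L3 \in S -> L1 != L2 ->
  A \in L1 :&: L2 -> A \notin L3 -> exists B C, triangle L1 L2 L3 A B C.
Proof.
move=> L1S L2S L3S L12 A12 nA3; have /setIP[A1 A2] := A12.
case/set0Pn: (S_meet L2S L3S) => B B23; case/set0Pn: (S_meet L3S L1S) => C C31.
exists B, C; split; rewrite // nA3 /=; have [/setIP[B2 B3] /setIP[C3 C1]] := (B23, C31).
apply/andP; split.
- by apply: contra nA3 => B1; rewrite (meet_onceS L1S L2S L12 A1 A2 B1 B2).
- by apply: contra nA3 => C2; rewrite (meet_onceS L1S L2S L12 A1 A2 C1 C2).
Qed.

Lemma triangle_through_vertex L1 L2 L3 A B C L :
  L1 \in S -> L2 \in S -> L3 \in S -> triangle L1 L2 L3 A B C -> L \in S ->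
  [|| A \in L, B \in L | C \in L].
Proof.
move=> L1S L2S L3S tri LS.
by apply: transversal_through_vertex (inS L1S) (inS L2S) (inS L3S) (inS LS) tri _ _ _;
  apply: S_meet.
Qed.

(* A cevian of a triangle: a line through a vertex other than the two sides there. *)
Lemma no_two_cevians L1 L2 L3 A B C L L' :
  L1 \in S -> L2 \in S -> L3 \in S -> L \in S -> L' \in S ->
  triangle L1 L2 L3 A B C -> A \in L -> B \in L' ->
  L != L1 -> L != L2 -> L' != L2 -> L' != L3 -> False.
Proof.
move=> L1S L2S L3S LS L'S [/setIP[A1 A2] /setIP[B2 B3] /setIP[C3 C1] /and3P[nA3 nB1 _]].
move=> AL BL' LL1 LL2 L'2 L'3.
have L13 : L1 != L3 by apply: contraNneq nA3 => <-.
case/set0Pn: (S_meet LS L3S) => D /setIP[DL D3].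
have nCL : C \notin L.
  by apply: contra nA3 => CL; rewrite (meet_onceS LS L1S LL1 AL A1 CL C1).
have nD1 : D \notin L1.
  by apply: contra nCL => D1; rewrite -(meet_onceS L1S L3S L13 D1 D3 C1 C3).
have tri' : triangle L L1 L3 A C D.
  by split; rewrite ?inE ?AL ?A1 ?C1 ?C3 ?D3 ?DL //; apply/and3P.
case/or3P: (transversal_through_vertex (inS LS) (inS L1S) (inS L3S) (inS L'S) tri'
  (S_meet L'S LS) (S_meet L'S L1S) (S_meet L'S L3S)) => [AL' | CL' | DL'].
- by move: nA3; rewrite (meet_onceS L'S L2S L'2 AL' A2 BL' B2) B3.
- by move: nB1; rewrite (meet_onceS L'S L3S L'3 BL' B3 CL' C3) C1.
- have DB : D = B := meet_onceS L'S L3S L'3 DL' D3 BL' B3.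
  by subst D; move: nA3; rewrite (meet_onceS LS L2S LL2 AL A2 DL B2) B3.
Qed.

Lemma fan_of_cevian L1 L2 L3 A B C L' :
  L1 \in S -> L2 \in S -> L3 \in S -> L' \in S ->
  triangle L1 L2 L3 A B C -> B \in L' -> L' != L2 -> L' != L3 ->
  forall L, L \in S -> L != L1 -> B \in L.
Proof.
move=> L1S L2S L3S L'S tri BL' L'2 L'3 L LS LL1.
have [_ /setIP[B2 B3] _ _] := tri.
case/or3P: (triangle_through_vertex L1S L2S L3S tri LS) => [AL | // | CL].
- have [-> // | LL2] := eqVneq L L2.
  by case: (no_two_cevians L1S L2S L3S LS L'S tri AL BL' LL1 LL2 L'2 L'3).
- have [-> // | LL3] := eqVneq L L3.
  by case: (no_two_cevians L2S L3S L1S L'S LS (triangle_rot tri) BL' CL L'2 L'3 LL3 LL1).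
Qed.

Lemma concurrent_or_fan : (2 < #|S|)%N ->
  (exists P, forall L, L \in S -> P \in L) \/ is_fan S.
Proof.
move=> S_gt2.
have [L1 [L2 [L1S L2S L12]]] : exists L1 L2, [/\ L1 \in S, L2 \in S & L1 != L2].
  by apply/card_gt1P; apply: ltnW.
case/set0Pn: (S_meet L1S L2S) => A A12; have /setIP[A1 A2] := A12.
have [/forall_inP allA | ] := boolP [forall L in S, A \in L]; first by left; exists A.
rewrite negb_forall_in => /exists_inP[L3 L3S nA3].
have [B [C tri]] := triangle_in_S L1S L2S L3S L12 A12 nA3.
have [_ _ _ /and3P[_ nB1 nC2]] := tri.
right; have [/forall_inP allA | ] := boolP [forall L in S, (L != L3) ==> (A \in L)].
  by exists A, L3; do 2!split=> //; move=> L LS; apply/implyP/allA.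
rewrite negb_forall_in => /exists_inP[L' L'S]; rewrite negb_imply => /andP[L'3 nAL'].
have L'1 : L' != L1 by apply: contraNneq nAL' => ->.
have L'2 : L' != L2 by apply: contraNneq nAL' => ->.
case/or3P: (triangle_through_vertex L1S L2S L3S tri L'S) => [AL' | BL' | CL'].
- by rewrite AL' in nAL'.
- by exists B, L1; do 2!split=> //; apply: fan_of_cevian L1S L2S L3S L'S tri BL' L'2 L'3.
- exists C, L2; do 2!split=> //.
  exact: fan_of_cevian L2S L1S L3S L'S (triangle_swap tri) CL' L'1 L'3.
Qed.

End PairwiseMeetingLines.

Theorem lemma3p1 (F : finFieldType) (q : nat)
  (hq : exists p k, prime p /\ q = (p ^ k.+1)%N)
  (hF : #|F| = (q ^ 2)%N)
  (S : {set {set 'M[F]_3}})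
  (hS : S \subset @unital_lines F q)
  (hs : (3 <= #|S|)%N)
  (hpair : forall L1 L2, L1 \in S -> L2 \in S -> L1 :&: L2 != set0) :
  (exists P, P \in @unital_points F q /\ forall L, L \in S -> P \in L)
  \/ is_fan S.
Proof.
have [p [k [p_prime qE]]] := hq.
have pchar_q : [pchar F].-nat q.
  have pF : p \in [pchar F].
    by apply: (card_finPcharP (n := (k.+1 * 2)%N)) p_prime; rewrite hF qE expnM.
  by rewrite (eq_pnat _ (pcharf_eq pF)) qE pnatX pnat_id.
have frobK : involutive (pchar_pow pchar_q).
  by move=> x; rewrite /pchar_pow -exprM mulnn -hF expf_card.
have transversal := @unital_transversal F q (pchar_pow pchar_q) (fun=> erefl) frobK.
case: (concurrent_or_fan (@unital_lines_meet_once F q) transversal hS hpair hs)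
  => [[P allP] | fan]; last by right.
have /set0Pn[L LS] : S != set0 by rewrite -card_gt0 (leq_trans _ hs).
by left; exists P; split; [apply: unital_line_sub (subsetP hS L LS) (allP L LS) |].
Qed.
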